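(* Let $V$ be a countable set, $\Omega_0$ a finite set, $\Omega=\Omega_0^V$ with product $\sigma$-algebra $\mathcal F$, $q\in\mathbb N$, and let $\gamma=(\gamma_\Lambda)_{\Lambda\Subset V}$ be a $q$-specification satisfying Assumption 1. For $\Lambda\Subset V$ let $V_{q,\Lambda}:\mathcal M_1(\Omega,\mathcal F)\to\mathcal M_1(\Omega,\mathcal F)$ be given by $V_{q,\Lambda}(\lambda)(A)=\int_{\Omega^q}\gamma_\Lambda(A\mid\sigma_1,\dots,\sigma_q)\prod_{i=1}^q\lambda(d\sigma_i)$, $A\in\mathcal F$. Then $$\mathcal G_q(\gamma)=\bigcap_{\Lambda\Subset V}\mathrm{Im}(V_{q,\Lambda}).$$
   Context: $\mathcal M_1(\Omega,\mathcal F)$ is the set of probability measures on $(\Omega,\mathcal F)$; $\mathrm{Im}$ denotes the image. $\mathcal F_\Delta$ is generated by coordinates in $\Delta$; $\mathcal F^q_{\Lambda^c}=(\mathcal F_{\Lambda^c})^{\otimes q}$. A probability $q$-kernel is a map $\gamma_\Lambda:\mathcal F\times\Omega^q\to[0,1]$ with $\gamma_\Lambda(\cdot\mid\eta_1,\dots,\eta_q)$ a probability measure and $\gamma_\Lambda(A\mid\cdot)$ $\mathcal F^q_{\Lambda^c}$-measurable; proper means $\gamma_\Lambda(A\mid\eta_1,\dots,\eta_q)=\frac1q\sum_i\mathbf 1_A(\eta_i)$ for $A\in\mathcal F_{\Lambda^c}$. Composition: $(\gamma_\Delta\gamma_\Lambda)(A\mid\eta)=\int_{\Omega^q}\gamma_\Lambda(A\mid\zeta_1,\dots,\zeta_q)\prod_i\gamma_\Delta(d\zeta_i\mid\eta)$.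 A $q$-specification is a family of proper probability $q$-kernels with $\gamma_\Delta\gamma_\Lambda=\gamma_\Delta$ for $\Lambda\subset\Delta\Subset V$. $\mathcal G_q(\gamma)$ is the set of $\mu\in\mathcal M_1(\Omega,\mathcal F)$ with $V_{q,\Lambda}(\mu)=\mu$ for all $\Lambda\Subset V$. Assumption 1: for each $\Lambda\Subset V$ there is a measurable $\tilde\gamma_\Lambda:\mathcal F\times\mathcal M_1(\Omega)\to[0,1]$ with $\gamma_\Lambda(A\mid\sigma_1,\dots,\sigma_q)=\tilde\gamma_\Lambda\big(A;\frac1q\sum_{i=1}^q\delta_{\sigma_i}\big)$ for all $A,\sigma_1,\dots,\sigma_q$. *)

From HB Require Import structures.
From mathcomp Require Import all_boot all_order all_algebra.
From mathcomp Require Import all_classical all_reals all_analysis.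
From mathcomp Require Import measurable_realfun.
Set Implicit Arguments. Unset Strict Implicit. Unset Printing Implicit Defensive.
Import Order.TTheory GRing.Theory Num.Theory.
Local Open Scope classical_set_scope.
Local Open Scope ring_scope.

(* The library's measurable types must be pointed, so we carry a point
   w0 of S^V (harmless: if S^V is empty there are no probability measures). *)
Section config.
Variables (V : countType) (S : finType) (w0 : V -> S).

Definition config := V -> S.
HB.instance Definition _ := gen_eqMixin config.
HB.instance Definition _ := gen_choiceMixin config.
HB.instance Definition _ := isPointed.Build config w0.

Definition coord_sets (D : set V) : set (set config) :=
  fun A => exists v a, D v /\ A = [set w : config | w v = a].

Definition Omega := g_sigma_algebraType (coord_sets setT).

Definition F_ (D : set V) : set (set Omega) := <<s coord_sets D >>.

Definition Fq_ (q : nat) (D : set V) : set (set (q.-tuple Omega)) :=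
  <<s fun B => exists (i : 'I_q) v a, D v /\
        B = [set t : q.-tuple Omega | tnth t i v = a] >>.

Variable R : realType.

(* integral over Omega^n against the product measure P^{\otimes n},
   written as an iterated integral *)
Fixpoint iter_int (P : probability Omega R) (n : nat) :
    (n.-tuple Omega -> \bar R) -> \bar R :=
  match n with
  | 0 => fun f => f [tuple]
  | m.+1 => fun f => (\int[P]_x iter_int P (fun t => f (cons_tuple x t)))%E
  end.

Variable q : nat.

Definition empirical (sigma : q.-tuple Omega) (B : set Omega) : \bar R :=
  ((q%:R)^-1 * \sum_(i < q) \1_B (tnth sigma i))%:E.

Definition qkernel_family := set V -> q.-tuple Omega -> probability Omega R.

Definition proper_qkernel (L : set V) (g : q.-tuple Omega -> probability Omega R) :=
  forall A, F_ (~` L) A -> forall eta, g eta A = empirical eta A.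

Definition qkernel_measurable (L : set V)
    (g : q.-tuple Omega -> probability Omega R) :=
  forall A : set Omega, measurable A -> forall B : set (\bar R), measurable B ->
    Fq_ (q:=q) (~` L) ((fun eta => g eta A) @^-1` B).

Definition qcomp (gD gL : q.-tuple Omega -> probability Omega R)
    (A : set Omega) (eta : q.-tuple Omega) : \bar R :=
  iter_int (gD eta) (fun zeta => gL zeta A).

Definition qspecification (gamma : qkernel_family) :=
  (forall L, finite_set L -> qkernel_measurable L (gamma L) /\
                             proper_qkernel L (gamma L)) /\
  (forall L D, finite_set L -> finite_set D -> L `<=` D ->
     forall A : set Omega, measurable A -> forall eta,
       qcomp (gamma D) (gamma L) A eta = gamma D eta A).

Definition assumption1 (gamma : qkernel_family) :=
  forall L, finite_set L ->
  exists gt : set Omega -> pprobability Omega R -> \bar R,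
    (forall A : set Omega, measurable A -> measurable_fun setT (gt A)) /\
    (forall A : set Omega, measurable A -> forall nu, (0 <= gt A nu <= 1)%E) /\
    (forall A : set Omega, measurable A -> forall (sigma : q.-tuple Omega)
        (nu : probability Omega R),
        (forall B : set Omega, measurable B -> nu B = empirical sigma B) ->
        gamma L sigma A = gt A nu).

Definition Vq (gamma : qkernel_family) (L : set V) (lam : probability Omega R)
    (A : set Omega) : \bar R :=
  iter_int lam (fun sigma => gamma L sigma A).

Definition Gq (gamma : qkernel_family) : set (probability Omega R) :=
  [set mu | forall L, finite_set L -> forall A : set Omega, measurable A ->
              Vq gamma L mu A = mu A].

Definition ImVq (gamma : qkernel_family) (L : set V) : set (probability Omega R) :=
  [set mu | exists lam : probability Omega R,
              forall A : set Omega, measurable A -> Vq gamma L lam A = mu A].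

End config.

From HB Require Import structures.
From mathcomp Require Import all_boot all_order all_algebra.
From mathcomp Require Import all_classical all_reals all_analysis.
From mathcomp Require Import measurable_realfun.
From mathcomp Require Import ring lra.
Set Implicit Arguments. Unset Strict Implicit. Unset Printing Implicit Defensive.
Import Order.TTheory GRing.Theory Num.Theory.
Local Open Scope classical_set_scope.
Local Open Scope ring_scope.

(** The kernels of a q-specification are automatically linear in the empirical
   measure: gamma_L(A | eta) = (1/q) sum_i gamma_L(A | eta_i, ..., eta_i).
   Indeed, by properness and F_{L^c}-measurability, gamma_L(. | b) integrates
   gamma_L(A | .) like the empirical measure of b, so consistency
   gamma_L gamma_L = gamma_L says that G = gamma_L(A | .) equals its average over
   the q^q tuples of entries of b.  The defect h of G from linearity inherits
   this averaging identity and vanishes on constant tuples, which carry weight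
   q^-q in the average; hence sup |h| <= (1 - q^-q) sup |h| and h = 0.
   Consequently V_L(lam)(A) = int gamma_L(A | x, ..., x) lam(dx), and V_L(lam)
   agrees with lam on F_{L^c}, where this integrand is measurable; therefore
   V_L(V_L(lam)) = V_L(lam). *)

Lemma sigma_algebra_cst T (G : set (set T)) (P : Prop) :
  sigma_algebra setT G -> G [set _ | P].
Proof.
move=> [G0 GC _]; have [p|np] := pselect P.
- rewrite (_ : [set _ | P] = setT); last by apply/seteqP; split.
  by rewrite -(setD0 setT); exact: GC.
- by rewrite (_ : [set _ | P] = set0) //; apply/seteqP; split.
Qed.

Lemma preimage_g_sigma_sub X Y (phi : X -> Y) (G : set (set Y)) (H : set (set X)) :
  sigma_algebra setT H -> (forall B, G B -> H (phi @^-1` B)) ->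
  forall B, <<s G >> B -> H (phi @^-1` B).
Proof.
move=> sH GH B GB.
have G_img : G `<=` image_set_system setT phi H.
  by move=> C /GH; rewrite /image_set_system /= setTI.
have := smallest_sub (sigma_algebra_image phi sH) G_img GB.
by rewrite /image_set_system /= setTI.
Qed.

Lemma eq_ge0_integral_comp d d' (X : measurableType d) (Y : measurableType d')
    (R : realType) (phi : X -> Y) (m1 m2 : {measure set X -> \bar R}) (f : Y -> \bar R) :
  measurable_fun setT phi ->
  (forall C, measurable C -> m1 (phi @^-1` C) = m2 (phi @^-1` C)) ->
  measurable_fun setT f -> (forall y, 0 <= f y)%E ->
  (\int[m1]_x f (phi x) = \int[m2]_x f (phi x))%E.
Proof.
move=> mphi m12 mf f0.
have push (m : {measure set X -> \bar R}) :
    (\int[pushforward m phi]_y f y = \int[m]_x f (phi x))%E.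
  by rewrite (ge0_integral_pushforward mphi m measurableT mf) ?preimage_setT.
by rewrite -!push; apply: eq_measure_integral => C mC _; exact: m12.
Qed.

Section iterated_average.
Variables (R : realType) (T : Type) (q : nat).

(* The mean of [f] over the [q ^ n] tuples of entries of [b], i.e. the [n]-fold
   iterated integral of [f] against the empirical measure of [b]. *)
Fixpoint iter_avg (b : q.-tuple T) n : (n.-tuple T -> R) -> R :=
  match n with
  | 0 => fun f => f [tuple]
  | m.+1 => fun f => q%:R^-1 *
      \sum_(i < q) iter_avg b (fun t : m.-tuple T => f (cons_tuple (tnth b i) t))
  end.

Lemma iter_avg_ge0 b n (f : n.-tuple T -> R) : (forall t, 0 <= f t) -> 0 <= iter_avg b f.
Proof.
elim: n f => [|n IH] f f0 /=; first exact: f0.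
by rewrite mulr_ge0 ?invr_ge0 // sumr_ge0 // => i _; apply: IH.
Qed.

Lemma iter_avgB b n (f g : n.-tuple T -> R) :
  iter_avg b (fun t => f t - g t) = iter_avg b f - iter_avg b g.
Proof.
elim: n f g => [|n IH] f g //=.
by rewrite -mulrBr -sumrB; congr (_ * _); apply: eq_bigr => i _; exact: IH.
Qed.

Lemma measurable_iter_avg d (X : measurableType d) b n (G : X -> n.-tuple T -> R) :
  (forall t, measurable_fun setT (G ^~ t)) ->
  measurable_fun setT (fun x => iter_avg b (G x)).
Proof.
elim: n G => [|n IH] G mG /=; first exact: mG.
apply: measurable_funM => //; apply: measurable_sum => i; exact: IH.
Qed.

Hypothesis q_gt0 : (0 < q)%N.

Let q_neq0 : q%:R != 0 :> R.
Proof. by rewrite pnatr_eq0 -lt0n. Qed.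

Let mean_cst x : q%:R^-1 * (x *+ q) = x :> R.
Proof. by rewrite -[x *+ q]mulr_natr mulrCA mulVf ?mulr1. Qed.

Lemma mean_norm_le (x : 'I_q -> R) (M : R) :
  (forall i, `|x i| <= M) -> `|q%:R^-1 * \sum_(i < q) x i| <= M.
Proof.
move=> xM; rewrite normrM ger0_norm ?invr_ge0 //.
have -> : M = q%:R^-1 * \sum_(i < q) M.
  by rewrite sumr_const card_ord mean_cst.
by rewrite ler_wpM2l ?invr_ge0 // (le_trans (ler_norm_sum _ _ _)) // ler_sum.
Qed.

Lemma iter_avg_norm_le b n (f : n.-tuple T -> R) (M : R) :
  (forall t, `|f t| <= M) -> `|iter_avg b f| <= M.
Proof.
elim: n f => [|n IH] f fM /=; first exact: fM.
by apply: mean_norm_le => i; apply: IH.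
Qed.

Lemma iter_avg_sum b n (a : R) (g : T -> R) :
  iter_avg b (fun t : n.-tuple T => a + \sum_(j < n) g (tnth t j)) =
  a + n%:R * (q%:R^-1 * \sum_(i < q) g (tnth b i)).
Proof.
elim: n a => [|n IH] a /=; first by rewrite big_ord0 mul0r.
have step i : iter_avg b (fun t : n.-tuple T =>
      a + \sum_(j < n.+1) g (tnth (cons_tuple (tnth b i) t) j)) =
    a + g (tnth b i) + n%:R * (q%:R^-1 * \sum_(i < q) g (tnth b i)).
  rewrite -IH; congr iter_avg; apply: funext => t.
  by rewrite big_ord_recl tnth0 addrA; congr (_ + _); apply: eq_bigr => j _; rewrite tnthS.
rewrite (eq_bigr _ (fun i _ => step i)) !big_split /= !sumr_const card_ord.
by field.
Qed.

(* The constant tuple at [tnth b i0] has weight [q ^ - n] in the mean. *)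
Lemma iter_avg_contract b (i0 : 'I_q) n (h : n.-tuple T -> R) (M : R) :
  (forall t, `|h t| <= M) -> h (nseq_tuple n (tnth b i0)) = 0 ->
  `|iter_avg b h| <= (1 - q%:R^-1 ^+ n) * M.
Proof.
elim: n h => [|n IH] h hM h0 /=.
  have -> : [tuple] = nseq_tuple 0 (tnth b i0) by exact/val_inj.
  by rewrite h0 normr0 expr0 subrr mul0r.
have at_i0 :
    `|iter_avg b (fun t => h (cons_tuple (tnth b i0) t))| <= (1 - q%:R^-1 ^+ n) * M.
  apply: IH => [t|]; first exact: hM.
  by rewrite -h0; congr h; exact/val_inj.
have elsewhere : \sum_(i < q | i != i0) `|iter_avg b (fun t => h (cons_tuple (tnth b i) t))|
    <= M *+ q - M.
  have : \sum_(i < q) M = M *+ q by rewrite sumr_const card_ord.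
  rewrite (bigD1 i0) //= => <-.
  by rewrite addrAC subrr add0r ler_sum // => i _; apply: iter_avg_norm_le.
have -> : (1 - q%:R^-1 ^+ n.+1) * M =
    q%:R^-1 * ((1 - q%:R^-1 ^+ n) * M + (M *+ q - M)) by rewrite exprS; field.
rewrite normrM ger0_norm ?invr_ge0 // ler_wpM2l ?invr_ge0 //.
apply: le_trans (ler_norm_sum _ _ _) _; rewrite (bigD1 i0) //=; exact: lerD.
Qed.

Lemma iter_avg_fixpoint_eq0 (h : q.-tuple T -> R) (M : R) :
  (forall t, `|h t| <= M) -> (forall x, h (nseq_tuple q x) = 0) ->
  (forall b, h b = iter_avg b h) -> forall b, h b = 0.
Proof.
move=> hM h_diag h_fix b.
pose E : set R := [set `|h t| | t in [set: q.-tuple T]].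
have E_sup : has_sup E by split; [exists `|h b|, b | exists M => _ [t _ <-]].
have le_sup t : `|h t| <= sup E by apply: sup_upper_bound => //; exists t.
have sup_le : sup E <= (1 - q%:R^-1 ^+ q) * sup E.
  apply: ge_sup; first by exists `|h b|, b.
  move=> _ [t _ <-]; rewrite h_fix.
  exact: iter_avg_contract le_sup (h_diag (tnth t (Ordinal q_gt0))).
have c_gt0 : 0 < q%:R^-1 ^+ q :> R by rewrite exprn_gt0 // invr_gt0 ltr0n.
have : q%:R^-1 ^+ q * sup E <= 0 by move: sup_le; rewrite mulrBl mul1r; lra.
rewrite pmulr_rle0 // => sup_le0.
by apply/normr0_eq0/eqP; rewrite eq_le normr_ge0 andbT (le_trans (le_sup b)).
Qed.

Lemma iter_avg_fixpoint_linear (G : q.-tuple T -> R) (M : R) :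
  (forall t, `|G t| <= M) -> (forall b, G b = iter_avg b G) ->
  forall b, G b = q%:R^-1 * \sum_(j < q) G (nseq_tuple q (tnth b j)).
Proof.
move=> GM G_fix b.
pose g x := q%:R^-1 * G (nseq_tuple q x).
pose h t := G t - (0 + \sum_(j < q) g (tnth t j)).
have h_bound t : `|h t| <= M + M.
  rewrite (le_trans (ler_normB _ _)) // lerD // add0r -mulr_sumr.
  exact: mean_norm_le.
have h_diag x : h (nseq_tuple q x) = 0.
  rewrite /h add0r (eq_bigr (fun=> g x)) => [|j _]; last by rewrite tnth_nseq.
  by rewrite sumr_const card_ord /g -mulrnAr mean_cst subrr.
have h_fix c : h c = iter_avg c h.
  by rewrite /h iter_avgB -G_fix iter_avg_sum !add0r mulrA mulfV // mul1r.
have /eqP := iter_avg_fixpoint_eq0 h_bound h_diag h_fix b.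
by rewrite subr_eq0 add0r -mulr_sumr => /eqP.
Qed.

End iterated_average.

Section configuration.
Variables (V : countType) (S : finType) (w0 : V -> S) (R : realType).

(* The measurable structure of [Omega V S] depends on the point [w0], which its
   type does not determine; [Om_out L] carries the sigma-algebra F_{L^c}. *)
Local Notation Om := (@g_sigma_algebraType
  (Defs_config__canonical__classical_sets_Pointed w0) (coord_sets setT)).
Local Notation Om_out L := (@g_sigma_algebraType
  (Defs_config__canonical__classical_sets_Pointed w0) (coord_sets (~` L))).

Lemma F_measurable (D : set V) (A : set Om) : F_ D A -> measurable A.
Proof.
apply: smallest_sub; first exact: smallest_sigma_algebra.
by move=> _ [v [a [_ ->]]]; apply: sub_gen_smallest; exists v, a.
Qed.

Lemma measurable_id_out (L : set V) : measurable_fun setT (id : Om -> Om_out L).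
Proof. by move=> _ B mB; rewrite setTI; exact: F_measurable mB. Qed.

Lemma measurable_fun_out (L : set V) d (Y : measurableType d) (f : Om -> Y) :
  (forall B, measurable B -> F_ (~` L) (f @^-1` B)) ->
  measurable_fun setT (f : Om_out L -> Y).
Proof. by move=> fL _ B mB; rewrite setTI; exact: fL. Qed.

Lemma Fq_preimage n (D : set V) X (H : set (set X)) (phi : X -> n.-tuple Om) :
  sigma_algebra setT H ->
  (forall i v a, D v -> H [set x | tnth (phi x) i v = a]) ->
  forall B, Fq_ (q:=n) D B -> H (phi @^-1` B).
Proof.
move=> sH phiH; apply: preimage_g_sigma_sub => // _ [i [v [a [Dv ->]]]]; exact: phiH.
Qed.

Lemma F_cons_slice n (D : set V) (t : n.-tuple Om) B :
  Fq_ (q:=n.+1) D B -> F_ D ((fun x : Om => cons_tuple x t) @^-1` B).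
Proof.
apply: Fq_preimage; first exact: smallest_sigma_algebra.
move=> i v a Dv; case: (unliftP ord0 i) => [j ->|->].
- rewrite (_ : [set x | _] = [set _ | tnth t j v = a]).
    by apply: sigma_algebra_cst; exact: smallest_sigma_algebra.
  by apply/seteqP; split => x /=; rewrite tnthS.
- rewrite (_ : [set x | _] = [set x : Om | x v = a]).
    by apply: sub_gen_smallest; exists v, a.
  by apply/seteqP; split => x /=; rewrite tnth0.
Qed.

Lemma Fq_cons_slice n (D : set V) (c : Om) B :
  Fq_ (q:=n.+1) D B -> Fq_ (q:=n) D ((fun t : n.-tuple Om => cons_tuple c t) @^-1` B).
Proof.
apply: Fq_preimage; first exact: smallest_sigma_algebra.
move=> i v a Dv; case: (unliftP ord0 i) => [j ->|->].
- rewrite (_ : [set x | _] = [set t : n.-tuple Om | tnth t j v = a]).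
    by apply: sub_gen_smallest; exists j, v, a.
  by apply/seteqP; split => x /=; rewrite tnthS.
- rewrite (_ : [set x | _] = [set _ | c v = a]).
    by apply: sigma_algebra_cst; exact: smallest_sigma_algebra.
  by apply/seteqP; split => x /=; rewrite tnth0.
Qed.

Lemma F_diag_preimage n (D : set V) B :
  Fq_ (q:=n) D B -> F_ D ((@nseq_tuple n Om) @^-1` B).
Proof.
apply: Fq_preimage; first exact: smallest_sigma_algebra.
move=> i v a Dv; rewrite (_ : [set x | _] = [set x : Om | x v = a]).
  by apply: sub_gen_smallest; exists v, a.
by apply/seteqP; split => x /=; rewrite tnth_nseq.
Qed.

Variable q : nat.

Definition empirical_measure (b : q.-tuple Om) : {measure set Om -> \bar R} :=
  mscale ((q%:R : R)^-1)%:nng (msum (fun k => \d_(nth (w0 : Om) b k)) q).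

Lemma empirical_measureE b C : empirical_measure b C = empirical R b C.
Proof.
rewrite /= /mscale /msum /empirical EFinM -sumEFin; congr (_ * _)%E.
by apply: eq_bigr => i _; rewrite /dirac indicE (tnth_nth (w0 : Om)).
Qed.

Lemma integral_empirical_measure b (f : Om -> \bar R) :
  measurable_fun setT f -> (forall x, 0 <= f x)%E ->
  (\int[empirical_measure b]_x f x = (q%:R^-1)%:E * \sum_(i < q) f (tnth b i))%E.
Proof.
move=> mf f0.
rewrite (ge0_integral_mscale _ measurableT _ mf (fun x _ => f0 x)).
rewrite (ge0_integral_measure_sum _ measurableT (fun x _ => f0 x) mf); congr (_ * _)%E.
by apply: eq_bigr => i _; rewrite integral_dirac // diracE in_setT mul1e (tnth_nth (w0 : Om)).
Qed.

Lemma integral_empirical_out (L : set V) b (rho : {measure set Om -> \bar R})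
    (f : Om_out L -> \bar R) :
  (forall C, F_ (~` L) C -> rho C = empirical R b C) ->
  measurable_fun setT f -> (forall x, 0 <= f x)%E ->
  (\int[rho]_x f x = (q%:R^-1)%:E * \sum_(i < q) f (tnth b i))%E.
Proof.
move=> rho_b mf f0; transitivity (\int[empirical_measure b]_x f x)%E.
  apply: (eq_ge0_integral_comp (@measurable_id_out L)) => // C mC.
  by rewrite empirical_measureE; exact: rho_b.
exact: integral_empirical_measure (measurableT_comp mf (@measurable_id_out L)) f0.
Qed.

Lemma iter_int_empirical_out (L : set V) (b : q.-tuple Om) (rho : probability Om R) :
  (forall C, F_ (~` L) C -> rho C = empirical R b C) ->
  forall n (F : n.-tuple Om -> \bar R),
  (forall B, measurable B -> Fq_ (~` L) (F @^-1` B)) ->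
  (forall t, F t \is a fin_num) -> (forall t, 0 <= F t)%E ->
  iter_int rho F = (iter_avg b (fun t => fine (F t)))%:E.
Proof.
move=> rho_b; elim=> [|n IH] F mF F_fin F0 /=; first by rewrite fineK.
have slice x : iter_int rho (fun t => F (cons_tuple x t)) =
    (iter_avg b (fun t => fine (F (cons_tuple x t))))%:E.
  by apply: IH => [B mB|t|t]; [exact: Fq_cons_slice (mF B mB)|exact: F_fin|exact: F0].
under eq_integral do rewrite slice.
rewrite (integral_empirical_out (L := L) rho_b) ?EFinM ?sumEFin //.
- apply/measurable_EFinP/measurable_iter_avg => t.
  apply: measurableT_comp (fine_measurable measurableT) _.
  by apply: measurable_fun_out => B mB; exact: F_cons_slice (mF B mB).
- by move=> x; rewrite lee_fin iter_avg_ge0 // => t; rewrite fine_ge0.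
Qed.

Lemma iter_int_sum (P : probability Om R) n (g : Om -> \bar R) :
  measurable_fun setT g -> (forall x, 0 <= g x)%E ->
  iter_int P (fun t : n.-tuple Om => \sum_(j < n) g (tnth t j)) =
  (n%:R%:E * \int[P]_x g x)%E.
Proof.
move=> mg g0; have int_g0 : (0 <= \int[P]_x g x)%E by apply: integral_ge0.
suff affine a : (0 <= a)%E ->
    iter_int P (fun t : n.-tuple Om => a + \sum_(j < n) g (tnth t j))%E =
    (a + n%:R%:E * \int[P]_x g x)%E.
  by rewrite -[RHS]add0e -affine //; congr iter_int; apply: funext => t; rewrite add0e.
elim: n a => [|n IH] a a0 /=; first by rewrite big_ord0 mul0e.
have slice x : iter_int P (fun t : n.-tuple Om =>
      a + \sum_(j < n.+1) g (tnth (cons_tuple x t) j))%E =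
    (a + g x + n%:R%:E * \int[P]_x g x)%E.
  rewrite -IH ?adde_ge0 //; congr iter_int; apply: funext => t.
  by rewrite big_ord_recl tnth0 addeA; congr (_ + _)%E; apply: eq_bigr => j _; rewrite tnthS.
under eq_integral do rewrite slice.
have c0 : (0 <= n%:R%:E * \int[P]_x g x)%E by rewrite mule_ge0.
have mag : measurable_fun setT (fun x => a + g x)%E by exact: emeasurable_funD.
rewrite (ge0_integralD P measurableT (fun x _ => adde_ge0 a0 (g0 x)) mag (fun x _ => c0)) //.
rewrite (ge0_integralD P measurableT (fun x _ => a0) (measurable_cst _) (fun x _ => g0 x)) //.
have P1 : (P : measure Om R) setT = 1%E := probability_setT P.
rewrite !integral_cst // !P1 !mule1 -addeA; congr (a + _)%E.
by rewrite -[n.+1]add1n natrD EFinD ge0_muleDl // mul1e.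
Qed.

Hypothesis q_gt0 : (0 < q)%N.

Lemma iter_int_empirical (lam : probability Om R) (C : set Om) : measurable C ->
  iter_int lam (fun sigma : q.-tuple Om => empirical R sigma C) = lam C.
Proof.
move=> mC; pose g x := ((q%:R : R)^-1 * \1_C x)%:E.
have mg : measurable_fun setT g.
  by apply/measurable_EFinP/measurable_funM => //; exact: measurable_indic.
have g0 x : (0 <= g x)%E by rewrite lee_fin mulr_ge0 ?invr_ge0.
have int_g : (\int[lam]_x g x = (q%:R^-1)%:E * lam C)%E.
  under eq_integral do rewrite /g EFinM.
  rewrite ge0_integralZl ?integral_indic ?setIT ?lee_fin ?invr_ge0 //.
  exact/measurable_EFinP/measurable_indic.
rewrite (_ : (fun sigma => _) = fun sigma : q.-tuple Om => \sum_(j < q) g (tnth sigma j)).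
  by rewrite iter_int_sum // int_g muleA -EFinM mulfV ?mul1e // pnatr_eq0 -lt0n.
by apply: funext => sigma; rewrite /empirical sumEFin mulr_sumr.
Qed.

Variable gamma : qkernel_family w0 R q.
Hypothesis gamma_spec : qspecification gamma.
Variable L : set V.
Hypothesis fin_L : finite_set L.

Lemma qspec_fixpoint (A : set Om) : measurable A -> forall b,
  fine (gamma L b A) = iter_avg b (fun eta => fine (gamma L eta A)).
Proof.
move=> mA b; have [kmeas kprop] := gamma_spec.1 L fin_L.
apply: EFin_inj; rewrite fineK ?fin_num_measure //.
rewrite -(gamma_spec.2 L L fin_L fin_L (@subset_refl _ L) A mA b) /qcomp.
apply: (iter_int_empirical_out (L := L)) => [C FC|B mB|eta|eta].
- exact: kprop.
- exact: kmeas.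
- exact: fin_num_measure.
- exact: measure_ge0.
Qed.

Lemma qspec_linear (A : set Om) : measurable A -> forall eta,
  gamma L eta A = (\sum_(j < q) (q%:R^-1)%:E * gamma L (nseq_tuple q (tnth eta j)) A)%E.
Proof.
move=> mA eta.
have le1 t : `|fine (gamma L t A)| <= 1.
  by rewrite ger0_norm ?fine_ge0 // -lee_fin fineK ?fin_num_measure // probability_le1.
rewrite -[LHS]fineK ?fin_num_measure //.
rewrite (iter_avg_fixpoint_linear q_gt0 le1 (qspec_fixpoint mA)) mulr_sumr -sumEFin.
by apply: eq_bigr => j _; rewrite EFinM fineK ?fin_num_measure.
Qed.

Lemma measurable_gamma_diag (A : set Om) : measurable A ->
  measurable_fun setT (fun x : Om_out L => gamma L (nseq_tuple q x) A).
Proof.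
move=> mA; apply: measurable_fun_out => B mB.
exact: F_diag_preimage ((gamma_spec.1 L fin_L).1 A mA B mB).
Qed.

Lemma Vq_diag (P : probability Om R) (A : set Om) : measurable A ->
  Vq gamma L P A = (\int[P]_x gamma L (nseq_tuple q x) A)%E.
Proof.
move=> mA.
have mk : measurable_fun setT (fun x : Om => gamma L (nseq_tuple q x) A).
  exact: measurableT_comp (measurable_gamma_diag mA) (@measurable_id_out L).
rewrite /Vq (funext (qspec_linear mA)).
rewrite (iter_int_sum P q (g := fun x => (q%:R^-1)%:E * gamma L (nseq_tuple q x) A)%E).
- rewrite ge0_integralZl ?lee_fin ?invr_ge0 // muleA -EFinM mulfV ?mul1e //.
  by rewrite pnatr_eq0 -lt0n.
- exact: emeasurable_funM.
- by move=> x; rewrite mule_ge0 ?lee_fin ?invr_ge0.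
Qed.

Lemma Vq_out (lam : probability Om R) (C : set Om) :
  F_ (~` L) C -> Vq gamma L lam C = lam C.
Proof.
move=> FC; rewrite -(iter_int_empirical lam (F_measurable FC)) /Vq.
by congr iter_int; apply: funext => eta; exact: (gamma_spec.1 L fin_L).2.
Qed.

Lemma Vq_image_fixed (lam mu : probability Om R) :
  (forall A, measurable A -> Vq gamma L lam A = mu A) ->
  forall A, measurable A -> Vq gamma L mu A = mu A.
Proof.
move=> lam_mu A mA; rewrite -[in RHS]lam_mu // !Vq_diag //.
apply: (eq_ge0_integral_comp (@measurable_id_out L) _ (measurable_gamma_diag mA)) => [C FC|x].
- by have := lam_mu C (F_measurable FC); rewrite Vq_out // => <-.
- exact: measure_ge0.
Qed.

End configuration.

Theorem mainTheorem10 (R : realType) (V : countType) (S : finType)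
  (w0 : V -> S) (q : nat) (gamma : qkernel_family w0 R q) :
  (0 < q)%N ->
  qspecification gamma ->
  assumption1 gamma ->
  Gq gamma = \bigcap_(L in [set L : set V | finite_set L]) ImVq gamma L.
Proof.
move=> q_gt0 gamma_spec _; apply/seteqP; split=> mu mu_in L fin_L.
- by exists mu => A mA; exact: mu_in.
- have [lam lam_mu] := mu_in L fin_L.
  exact (Vq_image_fixed q_gt0 gamma_spec fin_L lam_mu).
Qed.
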